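(* Let $M\ge1$. There exist two languages $L_1,L_2$ and an enumeration $x_{1:\infty}$ which, for each $K\in\{L_1,L_2\}$, is an $M$-bounded displacement enumeration with respect to $K$ and an enumeration of $K$ with $o(1)$-noise, such that any set-based generator that generates in the limit from the target $K$ (for either possible target $K\in\{L_1,L_2\}$) on this enumeration achieves set-based upper density at most $1/M$ (for some choice of the target).
   Context: The universe is $U=\mathbb{N}$ with its natural order; a language is an infinite subset of $U$ with canonical enumeration $\ell_1<\ell_2<\cdots$. For $A,B\subseteq\mathbb{N}$ with $B=\{b_1<b_2<\cdots\}$, $\mu_{\rm low}(A,B)=\liminf_n\frac1n|A\cap\{b_1,\dots,b_n\}|$. For $x\in U$, $\sigma(x,L)=j$ if $x=\ell_j$ and $0$ if $x\notin L$; $x_{1:\infty}$ is an $M$-bounded displacement enumeration with respect to $L$ if there is $n^\star$ with $\sigma(x_n,L)\le Mn$ for all $n\ge n^\star$. An enumeration of $L$ with $o(1)$-noise is a sequence of distinct elements listing every element of $L$ with $\frac1n|\{t\le n:x_t\notin L\}|\to0$. A set-based generator outputs, from $x_1,\dots,x_n$ and knowledge of $\{L_1,L_2\}$ (not $K$), a set $A_n\subseteq U\setminus\{x_1,\dots,x_n\}$; it generates in the limit from $K$ if $A_n\subseteq K$ for all large $n$; its set-based upper density is $\limsup_n\mu_{\rm low}(A_n,K)$. *)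

From Stdlib Require Import Reals Lra List Arith ClassicalDescription.
From Coquelicot Require Import Coquelicot.
Open Scope R_scope.

(* Sequences x_1, x_2, ... are represented 0-based:
   x_t (t >= 1) is [x (t-1)].  Likewise the canonical enumeration
   l_1 < l_2 < ... of a language is [l 0 < l 1 < ...], i.e. l_j = l (j-1). *)

Fixpoint countP (P : nat -> Prop) (n : nat) : nat :=
  match n with
  | O => O
  | S k => (countP P k + if excluded_middle_informative (P k) then 1 else 0)%nat
  end.

Definition language (L : nat -> Prop) : Prop :=
  forall n : nat, exists m : nat, (n <= m)%nat /\ L m.

Definition canonical_enum (L : nat -> Prop) (l : nat -> nat) : Prop :=
  (forall j, (l j < l (S j))%nat) /\ (forall y, L y <-> exists j, l j = y).

Definition sigma_rel (L : nat -> Prop) (l : nat -> nat) (y j : nat) : Prop :=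
  (L y /\ (1 <= j)%nat /\ l (j - 1)%nat = y) \/ (~ L y /\ j = 0%nat).

Definition bounded_displacement (M : R) (L : nat -> Prop) (l : nat -> nat)
    (x : nat -> nat) : Prop :=
  exists nstar : nat, forall n : nat, (nstar <= n)%nat -> (1 <= n)%nat ->
    forall j : nat, sigma_rel L l (x (n - 1)%nat) j -> INR j <= M * INR n.

Definition noisy_enum (L : nat -> Prop) (x : nat -> nat) : Prop :=
  (forall s t, x s = x t -> s = t) /\
  (forall y, L y -> exists t, x t = y) /\
  is_lim_seq (fun n => INR (countP (fun t => ~ L (x t)) n) / INR n) 0.

(* mu_low(A, B) where b is the canonical enumeration of B *)
Definition mu_low (A : nat -> Prop) (b : nat -> nat) : Rbar :=
  LimInf_seq (fun n => INR (countP (fun i => A (b i)) n) / INR n).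

Definition prefix (x : nat -> nat) (n : nat) : list nat := map x (seq 0 n).

(* a set-based generator: from the observed prefix it outputs a set of
   unseen elements (it may depend on {L1, L2}, which are fixed before it) *)
Definition set_based_generator (G : list nat -> (nat -> Prop)) : Prop :=
  forall (s : list nat) (y : nat), G s y -> ~ In y s.

Definition generates_in_limit (G : list nat -> (nat -> Prop)) (x : nat -> nat)
    (K : nat -> Prop) : Prop :=
  exists N : nat, forall n : nat, (N <= n)%nat ->
    forall y, G (prefix x n) y -> K y.

Definition upper_density (G : list nat -> (nat -> Prop)) (x : nat -> nat)
    (k : nat -> nat) : Rbar :=
  LimSup_seq (fun n => real (mu_low (G (prefix x n)) k)).

(* Take L1 = nat and for L2 the Beatty set {floor (j M)}, of density 1/M.  The
   enumeration lists L2 in increasing order, which keeps the displacement below M n,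
   and after the k-th block of (c_k + 1) Beatty numbers inserts the k-th number c_k
   missing from L2: late enough for the displacement bound, and rarely enough (k
   insertions cost about k^2/2 steps) for the noise with respect to L2 to vanish.
   A generator that generates in the limit from L2 eventually outputs subsets of
   L2, whose lower density inside L1 = nat is at most 1/M. *)

From Stdlib Require Import Reals Lra Lia ZArith ClassicalDescription Classical ConstructiveEpsilon.
From Coquelicot Require Import Coquelicot.
Open Scope R_scope.

Lemma countP_mono (P Q : nat -> Prop) n :
  (forall i, P i -> Q i) -> (countP P n <= countP Q n)%nat.
Proof.
  intros HPQ; induction n as [|n IH]; cbn [countP]; [lia|].
  destruct (excluded_middle_informative (P n)), (excluded_middle_informative (Q n));
    try lia.
  exfalso; auto.
Qed.

Lemma countP_le (P : nat -> Prop) n : (countP P n <= n)%nat.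
Proof.
  induction n as [|n IH]; cbn [countP]; [lia|].
  destruct (excluded_middle_informative (P n)); lia.
Qed.

Lemma countP_le_of_not_ge (P : nat -> Prop) c n :
  (forall i, (c <= i)%nat -> ~ P i) -> (countP P n <= c)%nat.
Proof.
  intros HP; induction n as [|n IH]; cbn [countP]; [lia|].
  destruct (excluded_middle_informative (P n)) as [Pn|]; [|lia].
  destruct (Nat.lt_ge_cases n c) as [Hnc|Hcn]; [|contradiction (HP n Hcn Pn)].
  pose proof (countP_le P n); lia.
Qed.

Lemma countP_ge_of_ge (P : nat -> Prop) c n :
  (forall i, (c <= i)%nat -> P i) -> (n - c <= countP P n)%nat.
Proof.
  intros HP; induction n as [|n IH]; cbn [countP]; [lia|].
  destruct (excluded_middle_informative (P n)) as [|nPn]; [lia|].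
  destruct (Nat.lt_ge_cases n c); [lia|exfalso; auto].
Qed.

Lemma is_lim_seq_inv_INR : is_lim_seq (fun n => / INR n) 0.
Proof.
  replace (Finite 0) with (Rbar_inv p_infty) by reflexivity.
  apply is_lim_seq_inv; [apply is_lim_seq_INR|discriminate].
Qed.

Lemma is_lim_seq_ratio_of_sq_le (c : nat -> nat) (C : nat) :
  (forall n, c n * c n <= C * n)%nat -> is_lim_seq (fun n => INR (c n) / INR n) 0.
Proof.
  intros Hc.
  apply is_lim_seq_le_le with (fun _ => 0) (fun n => sqrt (INR C * / INR n)).
  - intros n. pose proof (pos_INR (c n)) as Hc0.
    pose proof (le_INR _ _ (Hc n)) as Hsq; rewrite !mult_INR in Hsq.
    destruct n as [|n].
    { replace (INR (c 0%nat)) with 0 by (simpl in Hsq; nra).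
      unfold Rdiv; rewrite Rmult_0_l; split; [lra|apply sqrt_pos]. }
    assert (Hn : 0 < INR (S n)) by (apply lt_0_INR; lia).
    assert (Hr : 0 <= INR (c (S n)) / INR (S n)) by (apply Rdiv_le_0_compat; lra).
    split; [exact Hr|].
    rewrite <- (sqrt_square _ Hr). apply sqrt_le_1_alt.
    replace (INR (c (S n)) / INR (S n) * (INR (c (S n)) / INR (S n)))
      with (INR (c (S n)) * INR (c (S n)) / INR (S n) * / INR (S n)) by (field; lra).
    apply Rmult_le_compat_r; [apply Rlt_le, Rinv_0_lt_compat; lra|].
    apply Rle_div_l; lra.
  - apply is_lim_seq_const.
  - rewrite <- sqrt_0.
    apply is_lim_seq_continuous; [apply continuity_pt_sqrt; lra|].
    replace (Finite 0) with (Rbar_mult (INR C) 0) by (simpl; f_equal; ring).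
    apply is_lim_seq_scal_l, is_lim_seq_inv_INR.
Qed.

Definition count_bounded_by (P : nat -> Prop) (a : R) : Prop :=
  forall K, INR (countP P K) <= a * INR K + 1.

Lemma count_bounded_by_mono (P Q : nat -> Prop) a :
  (forall i, P i -> Q i) -> count_bounded_by Q a -> count_bounded_by P a.
Proof.
  intros HPQ HQ K. eapply Rle_trans; [|apply HQ].
  apply le_INR, countP_mono; exact HPQ.
Qed.

Lemma mu_low_le (A : nat -> Prop) (b : nat -> nat) a :
  count_bounded_by (fun i => A (b i)) a -> Rbar_le (mu_low A b) a.
Proof.
  intros HA.
  assert (Hlim : LimInf_seq (fun K => a + / INR K) = a).
  { apply is_LimInf_seq_unique, is_lim_LimInf_seq.
    rewrite <- (Rplus_0_r a) at 1.
    apply is_lim_seq_plus'; [apply is_lim_seq_const|apply is_lim_seq_inv_INR]. }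
  unfold mu_low; rewrite <- Hlim. apply LimInf_le.
  exists 1%nat; intros K HK.
  assert (0 < INR K) by (apply lt_0_INR; lia).
  apply Rle_div_l; [lra|].
  rewrite Rmult_plus_distr_r, Rinv_l by lra. apply HA.
Qed.

Lemma upper_density_le_of_generates (G : list nat -> nat -> Prop) x L l a :
  0 <= a -> count_bounded_by (fun i => L (l i)) a -> generates_in_limit G x L ->
  Rbar_le (upper_density G x l) a.
Proof.
  intros Ha HL [N HN].
  unfold upper_density; rewrite <- (LimSup_seq_const a). apply LimSup_le.
  exists N; intros n Hn.
  assert (Hmu : Rbar_le (mu_low (G (prefix x n)) l) a).
  { apply mu_low_le. apply (count_bounded_by_mono _ _ a) with (2 := HL).
    intros i; apply HN; exact Hn. }
  destruct (mu_low (G (prefix x n)) l); simpl in *; tauto.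
Qed.

Definition strictly_increasing (f : nat -> nat) : Prop := forall j, (f j < f (S j))%nat.

Section StrictlyIncreasing.
Variable f : nat -> nat.
Hypothesis f_incr : strictly_increasing f.

Lemma incr_le i j : (i <= j)%nat -> (f i <= f j)%nat.
Proof. intros Hij; induction Hij as [|j _ IH]; [lia|pose proof (f_incr j); lia]. Qed.

Lemma incr_lt i j : (i < j)%nat -> (f i < f j)%nat.
Proof. intros Hij; pose proof (f_incr i); pose proof (incr_le (S i) j Hij); lia. Qed.

Lemma incr_inj i j : f i = f j -> i = j.
Proof.
  intros E; destruct (Nat.lt_total i j) as [h|[h|h]]; auto;
    apply incr_lt in h; lia.
Qed.

Lemma incr_ge_id j : (j <= f j)%nat.
Proof. induction j as [|j IH]; [lia|pose proof (f_incr j); lia]. Qed.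

Lemma count_range_le K i : (K <= f i)%nat ->
  (countP (fun y => exists j, f j = y) K <= i)%nat.
Proof.
  revert i; induction K as [|K IH]; intros i Hi; cbn [countP]; [lia|].
  destruct (excluded_middle_informative _) as [[i' Hi']|_].
  - assert (i' < i)%nat.
    { destruct (Nat.lt_ge_cases i' i) as [|h]; [auto|apply incr_le in h; lia]. }
    specialize (IH i' ltac:(lia)); lia.
  - specialize (IH i ltac:(lia)); lia.
Qed.

Lemma count_bounded_by_range a : 0 <= a ->
  (forall j, INR j <= a * (INR (f j) + 1)) ->
  count_bounded_by (fun y => exists j, f j = y) a.
Proof.
  intros Ha Hf K; induction K as [|K IH]; cbn [countP].
  - simpl; lra.
  - rewrite plus_INR, S_INR.
    destruct (excluded_middle_informative _) as [[i Hi]|_].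
    + pose proof (le_INR _ _ (count_range_le K i ltac:(lia))) as Hc.
      specialize (Hf i); rewrite Hi in Hf; simpl; lra.
    + simpl; nra.
Qed.

End StrictlyIncreasing.

Lemma language_compl_of_count_bounded (P : nat -> Prop) a :
  a < 1 -> count_bounded_by P a -> language (fun y => ~ P y).
Proof.
  intros Ha HP c. apply NNPP; intros Hnone.
  assert (Hall : forall y, (c <= y)%nat -> P y).
  { intros y Hy; apply NNPP; intros nPy; apply Hnone; exists y; auto. }
  destruct (INR_unbounded ((a * INR c + 1) / (1 - a))) as [K HK].
  pose proof (le_INR _ _ (countP_ge_of_ge P c (c + K) Hall)) as Hge.
  replace (c + K - c)%nat with K in Hge by lia.
  specialize (HP (c + K)%nat); rewrite plus_INR in HP.
  apply Rlt_div_l in HK; lra.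
Qed.

Section EnumerateLanguage.
Variable L : nat -> Prop.
Hypothesis L_infinite : language L.

Definition least_from (m : nat) : nat :=
  proj1_sig (epsilon_smallest (fun y => (m <= y)%nat /\ L y)
    (fun y => excluded_middle_informative _) (L_infinite m)).

Lemma least_from_spec m :
  ((m <= least_from m)%nat /\ L (least_from m)) /\
  forall y, (m <= y)%nat -> L y -> (least_from m <= y)%nat.
Proof.
  unfold least_from; destruct (epsilon_smallest _ _ _) as [y [Hy Hmin]]; simpl.
  split; [exact Hy|intros z Hz Lz; apply Hmin; auto].
Qed.

Fixpoint enum_language (j : nat) : nat :=
  match j with
  | O => least_from 0
  | S j => least_from (S (enum_language j))
  end.

Lemma enum_language_incr : strictly_increasing enum_language.
Proof. intros j; simpl; destruct (least_from_spec (S (enum_language j))) as [[]]; lia. Qed.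

Lemma enum_language_in j : L (enum_language j).
Proof. destruct j; apply least_from_spec. Qed.

Lemma enum_language_below k z : L z -> (z < enum_language k)%nat ->
  exists i, enum_language i = z.
Proof.
  induction k as [|k IH]; intros Lz Hz.
  - destruct (least_from_spec 0) as [_ Hmin]; specialize (Hmin z ltac:(lia) Lz).
    simpl in Hz; lia.
  - destruct (Nat.lt_total z (enum_language k)) as [h|[h|h]].
    + apply IH; auto.
    + exists k; auto.
    + destruct (least_from_spec (S (enum_language k))) as [_ Hmin].
      specialize (Hmin z ltac:(lia) Lz); simpl in Hz; lia.
Qed.

Lemma canonical_enum_language : canonical_enum L enum_language.
Proof.
  split; [exact enum_language_incr|].
  intros y; split.
  - intros Ly; apply (enum_language_below (S y)); auto.
    pose proof (incr_ge_id _ enum_language_incr (S y)); lia.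
  - intros [j <-]; apply enum_language_in.
Qed.

End EnumerateLanguage.

Definition beatty (M : R) (j : nat) : nat := Z.to_nat (Int_part (INR j * M)).

Definition beatty_set (M : R) (y : nat) : Prop := exists j, beatty M j = y.

Lemma beatty_bounds M j : 0 <= M -> INR j * M - 1 < INR (beatty M j) <= INR j * M.
Proof.
  intros HM; unfold beatty.
  destruct (base_Int_part (INR j * M)) as [Hle Hgt].
  assert (0 <= INR j * M) by (apply Rmult_le_pos; [apply pos_INR|lra]).
  assert (Hpos : (0 <= Int_part (INR j * M))%Z).
  { assert (Hlt : (-1 < Int_part (INR j * M))%Z) by (apply lt_IZR; lra). lia. }
  rewrite (INR_IZR_INZ (Z.to_nat _)), Z2Nat.id by exact Hpos; lra.
Qed.

Lemma beatty_incr M : 1 <= M -> strictly_increasing (beatty M).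
Proof.
  intros HM j; apply INR_lt.
  pose proof (beatty_bounds M j ltac:(lra)); pose proof (beatty_bounds M (S j) ltac:(lra)).
  rewrite S_INR in *; lra.
Qed.

Lemma count_bounded_by_beatty M : 1 <= M -> count_bounded_by (beatty_set M) (1 / M).
Proof.
  intros HM; apply count_bounded_by_range; [apply beatty_incr; auto|..].
  - apply Rlt_le, Rdiv_lt_0_compat; lra.
  - intros j; destruct (beatty_bounds M j ltac:(lra)).
    unfold Rdiv; rewrite Rmult_1_l, Rmult_comm.
    apply Rle_div_r; [lra|]. lra.
Qed.

Section BlockMerge.
Variables s c B : nat -> nat.

(* Block [k] occupies the times [before k + k + r], [r <= B k]: it lists
   [s (before k)], ..., [s (before k + B k - 1)] and then [c k]. *)
Fixpoint before (k : nat) : nat :=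
  match k with O => O | S k => (before k + B k)%nat end.

Fixpoint locate (t : nat) : nat * nat :=
  match t with
  | O => (O, O)
  | S t => let (k, r) := locate t in if (r <? B k)%nat then (k, S r) else (S k, O)
  end.

Definition merge (t : nat) : nat :=
  let (k, r) := locate t in if (r <? B k)%nat then s (before k + r) else c k.

Lemma locate_sound t k r : locate t = (k, r) -> (r <= B k)%nat /\ t = (before k + k + r)%nat.
Proof.
  revert k r; induction t as [|t IH]; intros k r Ht; simpl in Ht.
  - injection Ht as <- <-; simpl; lia.
  - destruct (locate t) as [k' r']; destruct (IH k' r' eq_refl) as [Hr' ->].
    destruct (Nat.ltb_spec r' (B k')); injection Ht as <- <-; simpl; lia.
Qed.

Lemma before_lt k k' : (k < k')%nat -> (before k + B k <= before k')%nat.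
Proof. intros Hk; induction Hk; simpl; lia. Qed.

Lemma slot_unique k r k' r' : (r <= B k)%nat -> (r' <= B k')%nat ->
  (before k + k + r = before k' + k' + r')%nat -> k = k' /\ r = r'.
Proof.
  intros Hr Hr' E; destruct (Nat.lt_total k k') as [h|[h|h]];
    [pose proof (before_lt _ _ h)|subst|pose proof (before_lt _ _ h)]; lia.
Qed.

Lemma locate_complete k r : (r <= B k)%nat -> locate (before k + k + r) = (k, r).
Proof.
  intros Hr; destruct (locate (before k + k + r)) as [k' r'] eqn:E.
  destruct (locate_sound _ _ _ E) as [Hr' Ht].
  destruct (slot_unique _ _ _ _ Hr Hr' Ht) as [-> ->]; reflexivity.
Qed.

Lemma merge_s k r : (r < B k)%nat -> merge (before k + k + r) = s (before k + r).
Proof.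
  intros Hr; unfold merge; rewrite locate_complete by lia.
  destruct (Nat.ltb_spec r (B k)); [reflexivity|lia].
Qed.

Lemma merge_c k : merge (before k + k + B k) = c k.
Proof.
  unfold merge; rewrite locate_complete by lia.
  destruct (Nat.ltb_spec (B k) (B k)); [lia|reflexivity].
Qed.

Lemma merge_cases t :
  (exists k r, (r < B k)%nat /\ t = (before k + k + r)%nat /\ merge t = s (before k + r))
  \/ (exists k, t = (before k + k + B k)%nat /\ merge t = c k).
Proof.
  destruct (locate t) as [k r] eqn:E; destruct (locate_sound _ _ _ E) as [Hr ->].
  destruct (Nat.lt_ge_cases r (B k)).
  - left; exists k, r; auto using merge_s.
  - right; exists k; replace r with (B k) by lia; auto using merge_c.
Qed.

Hypothesis c_incr : strictly_increasing c.
Hypothesis c_lt_B : forall k, (c k < B k)%nat.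
Hypothesis s_inj : forall i j, s i = s j -> i = j.
Hypothesis s_ne_c : forall i k, s i <> c k.

Lemma merge_spec t :
  (exists j, (j <= t)%nat /\ merge t = s j) \/ (exists k, (c k < t)%nat /\ merge t = c k).
Proof.
  destruct (merge_cases t) as [[k [r [_ [-> E]]]]|[k [-> E]]].
  - left; exists (before k + r)%nat; split; [lia|exact E].
  - right; exists k; split; [pose proof (c_lt_B k); lia|exact E].
Qed.

Lemma merge_inj t t' : merge t = merge t' -> t = t'.
Proof.
  destruct (merge_cases t) as [[k [r [Hr [-> ->]]]]|[k [-> ->]]];
  destruct (merge_cases t') as [[k' [r' [Hr' [-> ->]]]]|[k' [-> ->]]]; intros E.
  - apply s_inj in E.
    destruct (Nat.lt_total k k') as [h|[<-|h]];
      [pose proof (before_lt _ _ h)|lia|pose proof (before_lt _ _ h)]; lia.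
  - exfalso; exact (s_ne_c _ _ E).
  - exfalso; exact (s_ne_c _ _ (eq_sym E)).
  - apply (incr_inj _ c_incr) in E; subst; reflexivity.
Qed.

Lemma merge_covers_s j : exists t, merge t = s j.
Proof.
  assert (Hslot : exists k r, (r < B k)%nat /\ (before k + r)%nat = j).
  { induction j as [|j [k [r [Hr <-]]]].
    - exists O, O; pose proof (c_lt_B 0); simpl; lia.
    - destruct (Nat.lt_ge_cases (S r) (B k)).
      + exists k, (S r); split; [auto|lia].
      + exists (S k), O; pose proof (c_lt_B (S k)); simpl; lia. }
  destruct Hslot as [k [r [Hr <-]]]; exists (before k + k + r)%nat; apply merge_s, Hr.
Qed.

Lemma merge_covers_c k : exists t, merge t = c k.
Proof. exists (before k + k + B k)%nat; apply merge_c. Qed.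

(* Only the block separators can fail [P], and [k] separators cost [before k >= k^2/2] time. *)
Lemma count_not_merge_sq (P : nat -> Prop) n : (forall j, P (s j)) ->
  (countP (fun t => ~ P (merge t)) n * countP (fun t => ~ P (merge t)) n <= 2 * n)%nat.
Proof.
  intros Ps.
  assert (Hcount : forall m, (countP (fun t => ~ P (merge t)) m <= fst (locate m))%nat).
  { induction m as [|m IH]; cbn [countP locate]; [lia|].
    destruct (locate m) as [k r] eqn:E; simpl in IH |- *.
    destruct (locate_sound _ _ _ E) as [Hr ->].
    destruct (excluded_middle_informative _) as [nP|];
      destruct (Nat.ltb_spec r (B k)) as [Hlt|]; simpl; try lia.
    exfalso; apply nP; rewrite merge_s by exact Hlt; apply Ps. }
  assert (Hbefore : forall k, (k * k <= 2 * before k)%nat).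
  { induction k as [|k IH]; simpl; [lia|].
    pose proof (incr_ge_id _ c_incr k); pose proof (c_lt_B k); nia. }
  specialize (Hcount n); destruct (locate n) as [k r] eqn:E.
  destruct (locate_sound _ _ _ E) as [_ ->]; specialize (Hbefore k); simpl in Hcount; nia.
Qed.

End BlockMerge.

Lemma bounded_displacement_of_index_le M L l x : 1 <= M ->
  (forall t j, l j = x t -> (j <= t)%nat) -> bounded_displacement M L l x.
Proof.
  intros HM Hidx; exists O; intros n _ Hn j [[_ [Hj Hl]]|[_ ->]].
  - apply Hidx in Hl.
    assert (Hjn : INR j <= INR n) by (apply le_INR; lia).
    pose proof (pos_INR n); nra.
  - pose proof (pos_INR n); simpl; nra.
Qed.

Lemma bounded_displacement_full M x :
  (forall t, INR (x t) + 1 <= M * (INR t + 1)) ->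
  bounded_displacement M (fun _ => True) (fun n => n) x.
Proof.
  intros Hx; exists O; intros n _ Hn j [[_ [Hj Hl]]|[F _]]; [|contradiction (F I)].
  specialize (Hx (n - 1)%nat).
  replace j with (S (x (n - 1)%nat)) by lia.
  replace n with (S (n - 1)) at 2 by lia.
  rewrite !S_INR; exact Hx.
Qed.

Definition hard_instance (M : R) (L1 L2 : nat -> Prop) (l1 l2 x : nat -> nat) : Prop :=
  language L1 /\ language L2 /\ ~ (forall y, L1 y <-> L2 y) /\
  canonical_enum L1 l1 /\ canonical_enum L2 l2 /\
  bounded_displacement M L1 l1 x /\ noisy_enum L1 x /\
  bounded_displacement M L2 l2 x /\ noisy_enum L2 x /\
  forall G : list nat -> (nat -> Prop),
    set_based_generator G ->
    generates_in_limit G x L1 -> generates_in_limit G x L2 ->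
    Rbar_le (upper_density G x l1) (1 / M) \/
    Rbar_le (upper_density G x l2) (1 / M).

Lemma hard_instance_full_space M L l x (C : nat) :
  1 <= M -> canonical_enum L l -> (exists y, ~ L y) ->
  (forall s t, x s = x t -> s = t) -> (forall y, exists t, x t = y) ->
  (forall t, INR (x t) + 1 <= M * (INR t + 1)) ->
  (forall t j, l j = x t -> (j <= t)%nat) ->
  (forall n, countP (fun t => ~ L (x t)) n * countP (fun t => ~ L (x t)) n <= C * n)%nat ->
  count_bounded_by L (1 / M) ->
  hard_instance M (fun _ => True) L (fun n => n) l x.
Proof.
  intros HM [l_incr l_range] [y nLy] x_inj x_onto Hx Hidx Hnoise Hcount.
  split; [intros n; exists n; auto|].
  split; [intros n; exists (l n); split; [apply (incr_ge_id _ l_incr)|apply l_range; eauto]|].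
  split; [intros Hall; apply nLy, Hall; trivial|].
  split; [split; [intros j; lia|intros z; split; eauto]|].
  split; [split; auto|].
  split; [apply bounded_displacement_full, Hx|].
  split.
  { split; [exact x_inj|split; [intros z _; apply x_onto|]].
    apply is_lim_seq_ratio_of_sq_le with O; intros n.
    pose proof (countP_le_of_not_ge (fun t => ~ True) 0 n (fun i _ F => F I)); cbv beta; nia. }
  split; [apply bounded_displacement_of_index_le; auto|].
  split; [split; [exact x_inj|split; [intros z _; apply x_onto|]]|].
  { apply is_lim_seq_ratio_of_sq_le with C; exact Hnoise. }
  intros G _ _ Hgen; left.
  apply upper_density_le_of_generates with L; [|exact Hcount|exact Hgen].
  apply Rlt_le, Rdiv_lt_0_compat; lra.
Qed.

(* For [M = 1] the Beatty set is all of [nat], so [L2] drops [0] instead; the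
   density bound [1] is then trivial. *)
Lemma hard_instance_one :
  exists L1 L2 l1 l2 x, hard_instance 1 L1 L2 l1 l2 x.
Proof.
  exists (fun _ => True), (fun y => (1 <= y)%nat), (fun n => n), S, (fun n => n).
  apply hard_instance_full_space with (C := 1%nat).
  - lra.
  - split; [intros j; lia|intros y; split; [exists (y - 1)%nat; lia|intros [j <-]; lia]].
  - exists O; lia.
  - auto.
  - eauto.
  - intros t; lra.
  - intros t j; lia.
  - intros n.
    pose proof (countP_le_of_not_ge (fun t => ~ (1 <= t)%nat) 1 n (fun i Hi F => F Hi)).
    pose proof (countP_le (fun t => ~ (1 <= t)%nat) n); nia.
  - intros K; pose proof (le_INR _ _ (countP_le (fun y => (1 <= y)%nat) K)); lra.
Qed.

Lemma hard_instance_gt1 M : 1 < M ->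
  exists L1 L2 l1 l2 x, hard_instance M L1 L2 l1 l2 x.
Proof.
  intros HM.
  assert (Hdens := count_bounded_by_beatty M ltac:(lra)).
  assert (Hcompl : language (fun y => ~ beatty_set M y)).
  { apply language_compl_of_count_bounded with (1 / M); [|exact Hdens].
    apply Rlt_div_l; lra. }
  set (c := enum_language _ Hcompl).
  destruct (canonical_enum_language _ Hcompl) as [c_incr c_range]; fold c in c_incr, c_range.
  assert (c_lt_B : forall k, (c k < S (c k))%nat) by (intros; lia).
  assert (s_incr := beatty_incr M ltac:(lra)).
  assert (s_ne_c : forall i k, beatty M i <> c k).
  { intros i k E; apply (proj2 (c_range (c k)) ltac:(eauto)); exists i; exact E. }
  exists (fun _ => True), (beatty_set M), (fun n => n), (beatty M),
    (merge (beatty M) c (fun k => S (c k))).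
  apply hard_instance_full_space with (C := 2%nat).
  - lra.
  - split; [exact s_incr|intros y; reflexivity].
  - exists (c O); apply c_range; eauto.
  - apply merge_inj; [exact c_incr|exact (incr_inj _ s_incr)|exact s_ne_c].
  - intros y; destruct (classic (beatty_set M y)) as [[j <-]|nSy].
    + apply merge_covers_s; exact c_lt_B.
    + destruct (proj1 (c_range y) nSy) as [k <-]; apply merge_covers_c.
  - intros t; destruct (merge_spec (beatty M) c _ c_lt_B t) as [[j [Hj ->]]|[k [Hk ->]]].
    + destruct (beatty_bounds M j ltac:(lra)) as [_ Hb].
      assert (INR j <= INR t) by (apply le_INR; exact Hj).
      pose proof (pos_INR j); nra.
    + assert (INR (S (c k)) <= INR t) by (apply le_INR; exact Hk).
      rewrite S_INR in *; pose proof (pos_INR t); nra.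
  - intros t j E; destruct (merge_spec (beatty M) c _ c_lt_B t) as [[j' [Hj' E']]|[k [_ E']]];
      rewrite E' in E.
    + apply (incr_inj _ s_incr) in E; lia.
    + contradiction (s_ne_c _ _ E).
  - intros n; apply count_not_merge_sq; [exact c_incr|exact c_lt_B|].
    intros j; exists j; reflexivity.
  - exact Hdens.
Qed.

Theorem theorem7p10 (M : R) (HM : 1 <= M) :
  exists (L1 L2 : nat -> Prop) (l1 l2 : nat -> nat) (x : nat -> nat),
    language L1 /\ language L2 /\ ~ (forall y, L1 y <-> L2 y) /\
    canonical_enum L1 l1 /\ canonical_enum L2 l2 /\
    bounded_displacement M L1 l1 x /\ noisy_enum L1 x /\
    bounded_displacement M L2 l2 x /\ noisy_enum L2 x /\
    forall G : list nat -> (nat -> Prop),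
      set_based_generator G ->
      generates_in_limit G x L1 -> generates_in_limit G x L2 ->
      Rbar_le (upper_density G x l1) (1 / M) \/
      Rbar_le (upper_density G x l2) (1 / M).
Proof.
  destruct (Rle_lt_or_eq_dec 1 M HM) as [HM1|<-].
  - exact (hard_instance_gt1 M HM1).
  - exact hard_instance_one.
Qed.
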